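(* Let $n\geq 3$ and $m\geq 1$. The matching $\mu$ on the face poset of $\Delta_m^{n,2}$ has no critical cells of dimension $2$.
   Context: $\Delta_m^{n,2}=\mathrm{VR}(\{0,\ldots,m\}^n;2)$, where $\{0,\ldots,m\}^n$ carries the Manhattan metric $d(x,y)=\sum_i|x_i-y_i|$ and $\mathrm{VR}(X;r)$ is the complex of finite subsets of diameter $\leq r$. Order the vertices as $v_1\prec\cdots\prec v_N$ ($N=(m+1)^n$) in the anti-lexicographic order ($x\prec y$ iff at the largest index $i$ with $x_i\neq y_i$, $x_i<y_i$). Let $T_0$ be the set of all simplices of $\Delta_m^{n,2}$, including the empty simplex. For $i=1,\ldots,N$ put $S_i=\{\sigma\in T_{i-1}: v_i\notin\sigma,\ \sigma\cup\{v_i\}\in T_{i-1}\}$, $\mu(\sigma)=\sigma\cup\{v_i\}$ for $\sigma\in S_i$, and $T_i=T_{i-1}\setminus(S_i\cup\{\sigma\cup\{v_i\}:\sigma\in S_i\})$. The critical cells of $\mu$ are the simplices in $T_N$; the dimension of a simplex is its cardinality minus one. *)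

From mathcomp Require Import all_boot.
Set Implicit Arguments. Unset Strict Implicit. Unset Printing Implicit Defensive.

Definition vtx (n m : nat) : finType := {ffun 'I_n -> 'I_m.+1}.

(* Manhattan metric d(x,y) = sum_i |x_i - y_i|  (|a-b| = (a-b)+(b-a) on nat). *)
Definition manhattan n m (x y : vtx n m) : nat :=
  \sum_(i < n) ((x i - y i) + (y i - x i)).

(* Simplices of VR({0..m}^n; 2): finite subsets of diameter <= 2
   (the empty simplex included). *)
Definition is_simplex n m (s : {set vtx n m}) : bool :=
  [forall x in s, forall y in s, manhattan x y <= 2].

Definition T0 n m : {set {set vtx n m}} := [set s | is_simplex s].

Definition antilex_lt n m (x y : vtx n m) : bool :=
  [exists i : 'I_n, (x i < y i) && [forall j : 'I_n, (i < j) ==> (x j == y j)]].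

Definition antilex_le n m (x y : vtx n m) : bool := (x == y) || antilex_lt x y.

Definition vseq n m : seq (vtx n m) := sort (@antilex_le n m) (enum (vtx n m)).

Definition Sstep n m (T : {set {set vtx n m}}) (v : vtx n m) : {set {set vtx n m}} :=
  [set s in T | (v \notin s) && ((v |: s) \in T)].

Definition step n m (T : {set {set vtx n m}}) (v : vtx n m) : {set {set vtx n m}} :=
  T :\: (Sstep T v :|: [set v |: s | s in Sstep T v]).

Definition critical n m : {set {set vtx n m}} := foldl (@step n m) (T0 n m) (vseq n m).

From mathcomp Require Import all_boot zify.
Set Implicit Arguments. Unset Strict Implicit. Unset Printing Implicit Defensive.

(* Let [s] be a critical triangle and [v] the first vertex with [v |: s] a
   simplex.  Then [s :\ v] and [v |: s] survive up to the step at [v], where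
   they are matched to each other and [s] disappears, unless some earlier [u]
   extends the edge [s :\ v = {b, c}] (with [v \in s]) but not [s].  In that
   case [b] and [c] lie coordinatewise between [v] and [u], and the median of
   [v], [b], [c], lowered by one in the top coordinate where [u] and [v]
   differ, is an antilexicographically earlier vertex extending [s],
   contradicting the choice of [v]. *)

Definition distn (x y : nat) : nat := (x - y) + (y - x).

Lemma distn_between a x u :
  distn a x + distn x u = distn a u -> minn a u <= x <= maxn a u.
Proof. by rewrite /distn; lia. Qed.

Lemma distn_predl x y : distn x.-1 y <= (distn x y).+1.
Proof. by rewrite /distn; lia. Qed.

Definition med3 (x y z : nat) : nat := maxn (minn x y) (minn (maxn x y) z).

Lemma med3_le_max x y z : med3 x y z <= maxn x y.
Proof. by rewrite /med3; lia. Qed.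

Lemma med3xx x z : med3 x x z = x.
Proof. by rewrite /med3; lia. Qed.

Lemma med3C12 x y z : med3 x y z = med3 y x z.
Proof. by rewrite /med3; lia. Qed.

Lemma med3C23 x y z : med3 x y z = med3 x z y.
Proof. by rewrite /med3; lia. Qed.

Lemma distn_med3 x y z : distn (med3 x y z) x + distn (med3 x y z) y = distn x y.
Proof. by rewrite /distn /med3; lia. Qed.

Lemma setD1_id (T : finType) (a : T) (A : {set T}) : a \notin A -> A :\ a = A.
Proof. by move=> aA; apply/setP => x; rewrite !inE; case: eqP => // ->; rewrite (negbTE aA). Qed.

Section Grid.
Variables n m : nat.
Local Notation V := (vtx n m).

Lemma manhattanE (x y : V) : manhattan x y = \sum_(i < n) distn (x i) (y i).
Proof. by []. Qed.

Lemma manhattanC (x y : V) : manhattan x y = manhattan y x.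
Proof. by apply: eq_bigr => i _; rewrite addnC. Qed.

Lemma manhattanxx (x : V) : manhattan x x = 0.
Proof. by apply: big1 => i _; rewrite subnn. Qed.

Lemma manhattan_eq0 (x y : V) : (manhattan x y == 0) = (x == y).
Proof.
apply/idP/eqP => [|->]; last by rewrite manhattanxx.
rewrite /manhattan sum_nat_eq0 => /forallP xy.
by apply/ffunP => i; apply/val_inj; move: (xy i) => /=; lia.
Qed.

(* The triangle excess [distn a x + distn x u - distn a u] is even in every
   coordinate, so a total excess of at most one forces it to vanish. *)
Lemma manhattan_between (a x u : V) :
  manhattan a x + manhattan x u <= (manhattan a u).+1 ->
  forall i, distn (a i) (x i) + distn (x i) (u i) = distn (a i) (u i).
Proof.
rewrite !manhattanE => le_sum i.
pose excess j := distn (a j) (x j) + distn (x j) (u j) - distn (a j) (u j).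
have split_sum : \sum_(j < n) distn (a j) (x j) + \sum_(j < n) distn (x j) (u j)
    = \sum_(j < n) excess j + \sum_(j < n) distn (a j) (u j).
  rewrite -!big_split; apply: eq_bigr => j _ /=; rewrite /excess /distn.
  by move: (nat_of_ord (a j)) (nat_of_ord (x j)) (nat_of_ord (u j)); lia.
have excess_sum : \sum_(j < n) excess j <= 1 by lia.
have : excess i <= 1 by apply: leq_trans excess_sum; rewrite (bigD1 i) //= leq_addr.
by rewrite /excess /distn; lia.
Qed.

Definition median (a b c : V) : V := [ffun i => inord (med3 (a i) (b i) (c i))].

Lemma medianE (a b c : V) i : median a b c i = med3 (a i) (b i) (c i) :> nat.
Proof.
rewrite ffunE inordK //.
by have := ltn_ord (a i); have := ltn_ord (b i); have := ltn_ord (c i); rewrite /med3; lia.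
Qed.

Lemma medianC12 (a b c : V) : median a b c = median b a c.
Proof. by apply/ffunP => i; apply: val_inj; rewrite /= !medianE med3C12. Qed.

Lemma medianC23 (a b c : V) : median a b c = median a c b.
Proof. by apply/ffunP => i; apply: val_inj; rewrite /= !medianE med3C23. Qed.

Lemma manhattan_median (a b c : V) :
  manhattan (median a b c) a + manhattan (median a b c) b = manhattan a b.
Proof.
by rewrite !manhattanE -big_split; apply: eq_bigr => i _ /=; rewrite medianE distn_med3.
Qed.

Lemma manhattan_median_le1 (a b c : V) : b != c ->
  manhattan a b <= 2 -> manhattan a c <= 2 -> manhattan (median a b c) a <= 1.
Proof.
rewrite -manhattan_eq0 => bc ab ac.
have := manhattan_median a b c.
have := manhattan_median a c b; rewrite -medianC23.
have := manhattan_median b c a; rewrite -medianC23 -medianC12.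
move: (manhattan (median a b c) a) (manhattan (median a b c) b).
by move: (manhattan (median a b c) c); lia.
Qed.

Definition lower_at (k : 'I_n) (x : V) : V :=
  [ffun i => if i == k then inord (x i).-1 else x i].

Lemma lower_atE k (x : V) i : lower_at k x i = (if i == k then (x i).-1 else x i) :> nat.
Proof.
rewrite ffunE; case: eqP => // _.
by rewrite inordK // (leq_ltn_trans (leq_pred _)).
Qed.

Lemma manhattan_lower_at k (x y : V) : manhattan (lower_at k x) y <= (manhattan x y).+1.
Proof.
rewrite !manhattanE (bigD1 k) //= [X in _ <= X.+1](bigD1 k) //= lower_atE eqxx -addSn.
rewrite leq_add //; last first.
  by apply: eq_leq; apply: eq_bigr => i /negbTE i_neq_k; rewrite lower_atE i_neq_k.
exact: distn_predl.
Qed.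

(* [w] is the median of the triangle [a b c], pushed one step down in the
   coordinate [k] where [u] and [a] first differ (from the top); [b] and [c]
   lie coordinatewise between [a] and [u], which keeps the median at or below
   [a] in coordinate [k] and equal to [a] above it. *)
Lemma antilex_lower_neighbour (a b c u : V) :
  a != b -> b != c -> a != c ->
  manhattan a b <= 2 -> manhattan a c <= 2 -> manhattan b c <= 2 ->
  manhattan u b <= 2 -> manhattan u c <= 2 -> 2 < manhattan u a ->
  antilex_lt u a ->
  exists2 w : V, antilex_lt w a &
    [&& manhattan w a <= 2, manhattan w b <= 2 & manhattan w c <= 2].
Proof.
move=> ab bc ac dab dac dbc dub duc dua /existsP[k /andP[ua_k /forallP ua_above]].
have between (x : V) : manhattan a x <= 2 -> manhattan u x <= 2 ->
    forall i, minn (a i) (u i) <= x i <= maxn (a i) (u i).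
  move=> dax dux i; apply: distn_between; apply: manhattan_between.
  rewrite manhattanC in dux; rewrite (manhattanC a u).
  exact: leq_trans (leq_add dax dux) _.
have [/andP[_ bk] /andP[_ ck]] := (between b dab dub k, between c dac duc k).
rewrite (maxn_idPl (ltnW ua_k)) in bk ck.
have b_above (j : 'I_n) : k < j -> b j = a j.
  move=> kj; have ua_j : u j = a j := eqP (implyP (ua_above j) kj).
  have := between b dab dub j; rewrite -ua_j minnn maxnn => b_u.
  by apply/val_inj/anti_leq; rewrite andbC.
set md := median a b c.
exists (lower_at k md).
- apply/existsP; exists k; rewrite lower_atE eqxx medianE; apply/andP; split.
    have : med3 (a k) (b k) (c k) <= a k.
      by apply: leq_trans (med3_le_max _ _ _) _; rewrite geq_max leqnn bk.
    by case: (med3 _ _ _) => [_|x md_k]; [exact: leq_ltn_trans (leq0n _) ua_k | exact: md_k].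
  apply/forallP => j; apply/implyP => kj; apply/eqP/val_inj.
  by rewrite /= lower_atE -val_eqE (gtn_eqF kj) medianE (b_above j kj) med3xx.
- have le1_a := manhattan_median_le1 bc dab dac.
  have le1_b : manhattan md b <= 1.
    by rewrite /md medianC12 manhattan_median_le1 // 1?manhattanC.
  have le1_c : manhattan md c <= 1.
    by rewrite /md medianC23 medianC12 manhattan_median_le1 // 1?manhattanC // eq_sym.
  by rewrite !(leq_trans (manhattan_lower_at _ _ _)).
Qed.
End Grid.

Section AntiLex.
Variables n m : nat.
Local Notation V := (vtx n m).

Lemma antilex_ltxx (x : V) : ~~ antilex_lt x x.
Proof. by apply/existsP => -[i]; rewrite ltnn. Qed.

Lemma antilex_lt_asym (x y : V) : antilex_lt x y -> ~~ antilex_lt y x.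
Proof.
move=> /existsP[i /andP[xy_i /forallP xy_above]].
apply/existsP => -[j /andP[yx_j /forallP yx_above]].
case: (ltngtP i j) => [ij|ji|/val_inj eq_ij].
- by move: (xy_above j) yx_j; rewrite ij => /eqP ->; rewrite ltnn.
- by move: (yx_above i) xy_i; rewrite ji => /eqP ->; rewrite ltnn.
- by move: xy_i yx_j; rewrite eq_ij; lia.
Qed.

Lemma antilex_lt_trans : transitive (@antilex_lt n m).
Proof.
move=> y x z /existsP[i /andP[xy_i /forallP xy_above]].
move=> /existsP[j /andP[yz_j /forallP yz_above]].
apply/existsP; exists (if i < j then j else i); apply/andP; split.
- case: (ltngtP i j) => [ij|ji|/val_inj eq_ij] /=.
  + by move: (xy_above j); rewrite ij => /eqP ->.
  + by move: (yz_above i); rewrite ji => /eqP <-.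
  + by rewrite -eq_ij in yz_j; exact: ltn_trans yz_j.
- apply/forallP => l; apply/implyP => above.
  have [il jl] : i < l /\ j < l.
    case: (ltnP i j) above => ij above; split=> //.
      exact: ltn_trans ij above.
    exact: leq_ltn_trans ij above.
  by move: (xy_above l) (yz_above l); rewrite il jl => /eqP -> /eqP ->.
Qed.

Lemma antilex_le_trans : transitive (@antilex_le n m).
Proof.
move=> y x z /predU1P[->//|xy] /predU1P[<-|yz]; rewrite /antilex_le ?xy ?orbT //.
by rewrite (antilex_lt_trans xy yz) orbT.
Qed.

Lemma antilex_le_total : total (@antilex_le n m).
Proof.
move=> x y; rewrite /antilex_le; case: (eqVneq x y) => //= x_neq_y.
have [i xy_i] : exists i, x i != y i.
  apply/existsP; apply: contraR x_neq_y => /existsPn xy.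
  by apply/eqP/ffunP => i; apply/eqP/negPn.
pose k := [arg max_(j > i | x j != y j) (j : nat)].
have [xy_k k_max] : x k != y k /\ forall j : 'I_n, x j != y j -> j <= k.
  by rewrite /k; case: arg_maxnP.
have above (l : 'I_n) : k < l -> x l = y l.
  by move=> kl; apply/eqP; apply: contraTT kl => /k_max; rewrite -leqNgt.
case: (ltngtP (x k) (y k)) => [lt_k|gt_k|/val_inj eq_k]; last by rewrite eq_k eqxx in xy_k.
- apply/orP; left; apply/existsP; exists k; rewrite lt_k /=.
  by apply/forallP => l; apply/implyP => /above ->.
- apply/orP; right; apply/existsP; exists k; rewrite gt_k /=.
  by apply/forallP => l; apply/implyP => /above ->.
Qed.

Lemma antilex_le_refl : reflexive (@antilex_le n m).
Proof. by move=> x; rewrite /antilex_le eqxx. Qed.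

Lemma mem_vseq (x : V) : x \in vseq n m.
Proof. by rewrite mem_sort mem_enum. Qed.

Lemma vseq_uniq : uniq (vseq n m).
Proof. by rewrite sort_uniq enum_uniq. Qed.

Lemma index_vseq_lt (x y : V) :
  (index x (vseq n m) < index y (vseq n m)) = antilex_lt x y.
Proof.
have sorted_vseq : sorted (@antilex_le n m) (vseq n m) := sort_sorted antilex_le_total _.
apply/idP/idP => [lt_xy|xy].
- have /predU1P[eq_xy|//] :=
    sorted_ltn_index antilex_le_trans sorted_vseq _ _ (mem_vseq x) (mem_vseq y) lt_xy.
  by rewrite eq_xy ltnn in lt_xy.
- rewrite ltnNge; apply/negP => le_yx.
  have /predU1P[eq_yx|yx] := sorted_leq_index antilex_le_trans antilex_le_refl
    sorted_vseq _ _ (mem_vseq y) (mem_vseq x) le_yx.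
  + by rewrite eq_yx (negbTE (antilex_ltxx x)) in xy.
  + by rewrite (negbTE (antilex_lt_asym xy)) in yx.
Qed.
End AntiLex.

Section Simplices.
Variables n m : nat.
Local Notation V := (vtx n m).

Lemma simplexP (s : {set V}) :
  reflect {in s &, forall x y, manhattan x y <= 2} (is_simplex s).
Proof.
apply: (iffP forallP) => [sim x y xs ys | sim x].
  by have /implyP/(_ xs)/forallP/(_ y)/implyP := sim x; apply.
by apply/implyP => xs; apply/forallP => y; apply/implyP; apply: sim.
Qed.

Lemma simplexS (s t : {set V}) : t \subset s -> is_simplex s -> is_simplex t.
Proof.
by move=> ts /simplexP sim; apply/simplexP => x y /(subsetP ts) xs /(subsetP ts); apply: sim.
Qed.

Lemma simplexU1 (u : V) (s : {set V}) : is_simplex s ->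
  is_simplex (u |: s) = [forall y in s, manhattan u y <= 2].
Proof.
move=> /simplexP sim; apply/simplexP/forall_inP => [sim_u y ys | near_u x y].
  by apply: sim_u; rewrite !inE ?ys ?eqxx ?orbT.
case/setU1P=> [->|xs] /setU1P[->|ys]; rewrite ?manhattanxx ?near_u //.
  by rewrite manhattanC near_u.
exact: sim.
Qed.

Lemma triangle_extends_before (s : {set V}) (u v : V) :
  is_simplex s -> #|s| = 3 -> v \in s -> antilex_lt u v ->
  is_simplex (u |: (s :\ v)) -> ~~ is_simplex (u |: s) ->
  exists2 w : V, antilex_lt w v & is_simplex (w |: s).
Proof.
move=> sim_s card_s v_s uv sim_u not_sim_u.
have /cards2P[b [c [bc s_v]]] : #|s :\ v| == 2.
  by move: card_s; rewrite (cardsD1 v) v_s add1n => -[->].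
have [vb vc] : v != b /\ v != c.
  by have := setD11 v s; rewrite s_v !inE => /negbT/norP.
have s_vbc : s = [set v; b; c] by rewrite -setUA -s_v setD1K.
have [b_s c_s] : b \in s /\ c \in s by rewrite s_vbc !inE !eqxx !orbT.
have d_s := simplexP _ sim_s.
have d_u y : y \in s :\ v -> manhattan u y <= 2.
  by move=> y_sv; apply: (simplexP _ sim_u); [exact: setU11 | exact: setU1r].
have [ub uc] : manhattan u b <= 2 /\ manhattan u c <= 2.
  by rewrite !d_u // s_v !inE !eqxx ?orbT.
have extends (x : V) : manhattan x v <= 2 -> manhattan x b <= 2 -> manhattan x c <= 2 ->
    is_simplex (x |: s).
  move=> xv xb xc; rewrite simplexU1 //; apply/forall_inP => y.
  by rewrite s_vbc !inE => /orP[/orP[]|] /eqP->.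
have uv_far : 2 < manhattan u v.
  by rewrite ltnNge; apply: contra not_sim_u => uv_near; apply: extends.
have [w wv /and3P[w_v w_b w_c]] :=
  antilex_lower_neighbour vb bc vc (d_s _ _ v_s b_s) (d_s _ _ v_s c_s) (d_s _ _ b_s c_s)
    ub uc uv_far uv.
by exists w => //; apply: extends.
Qed.
End Simplices.

Lemma T0_closed n m (s t : {set vtx n m}) : t \subset s -> s \in T0 n m -> t \in T0 n m.
Proof. by rewrite !inE; apply: simplexS. Qed.

Section Matching.
Variables n m : nat.
Local Notation V := (vtx n m).
Local Notation step := (@step n m).

Lemma step_sub (T : {set {set V}}) (v : V) : step T v \subset T.
Proof. exact: subsetDl. Qed.

Lemma foldl_step_sub (T : {set {set V}}) (p : seq V) : foldl step T p \subset T.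
Proof.
elim: p T => [|u p IHp] T /=; first exact: subxx.
exact: subset_trans (IHp _) (step_sub _ _).
Qed.

Lemma foldl_step_sub_take (T : {set {set V}}) (p : seq V) j :
  foldl step T p \subset foldl step T (take j p).
Proof. by rewrite -{1}(cat_take_drop j p) foldl_cat foldl_step_sub. Qed.

Lemma foldl_step_unmatched (T : {set {set V}}) (p : seq V) (t : {set V}) :
  t \in T -> {in p, forall u, u |: t \notin T} -> t \in foldl step T p.
Proof.
elim: p T => [|u p IHp] T //= t_T unmatched.
have ut_T : u |: t \notin T by apply: unmatched; exact: mem_head.
apply: IHp => [|u' u'_p].
  rewrite /step inE t_T andbT !inE negb_or t_T (negbTE ut_T) andbF /=.
  apply/imsetP => -[t' _ t_ut'].
  by move: ut_T; rewrite t_ut' setUA setUid -t_ut' t_T.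
exact: contra (subsetP (step_sub _ _) _) (unmatched u' (mem_behead (s := u :: p) u'_p)).
Qed.

Lemma step_matched (T : {set {set V}}) (v : V) (t : {set V}) :
  v \notin t -> t \in T -> v |: t \in T -> t \notin step T v /\ v |: t \notin step T v.
Proof.
move=> v_t t_T vt_T; have t_S : t \in Sstep T v by rewrite inE t_T v_t vt_T.
by split; rewrite /step in_setD negb_and negbK in_setU ?t_S ?(imset_f _ t_S) ?orbT.
Qed.

(* [s] is [s :\ v] or [v |: s]; both survive the steps of [p] and are then
   matched to each other at [v]. *)
Lemma foldl_step_first_match (K : {set {set V}}) (p : seq V) (v : V) (s : {set V}) :
  (forall t t' : {set V}, t' \subset t -> t \in K -> t' \in K) ->
  v |: s \in K -> {in p, forall u, u |: (s :\ v) \notin K} ->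
  s \notin foldl step K (rcons p v).
Proof.
move=> K_closed vs_K unmatched; set t := s :\ v.
have vt_vs : v |: t = v |: s by apply/setP => x; rewrite !inE; case: eqP.
have vt_K : v |: t \in K by rewrite vt_vs.
have t_K : t \in K by apply: K_closed vt_K; exact: subsetUr.
have unmatched_vt : {in p, forall u, u |: (v |: t) \notin K}.
  by move=> u u_p; apply: contra _ (unmatched u u_p); apply: K_closed; apply/setUS/subsetUr.
have [t_out vt_out] := step_matched (negbT (setD11 v s))
  (foldl_step_unmatched t_K unmatched) (foldl_step_unmatched vt_K unmatched_vt).
rewrite foldl_rcons; case: (boolP (v \in s)) => [/setD1K <- // | /setD1_id s_v].
by rewrite -s_v.
Qed.
End Matching.

Theorem lemma4p9 (n m : nat) (hn : 3 <= n) (hm : 1 <= m)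
  (s : {set vtx n m}) : s \in critical n m -> #|s| != 3.
Proof.
move=> crit_s; apply/eqP => card_s.
have sim_s : is_simplex s by rewrite -inE; apply: subsetP crit_s; apply: foldl_step_sub.
have /set0Pn[x x_s] : s != set0 by rewrite -card_gt0 card_s.
set vs := vseq n m; set extends := [pred v | is_simplex (v |: s)].
have has_extends : has extends vs.
  by apply/hasP; exists x; rewrite ?mem_vseq //= (setUidPr _) ?sub1set.
set j := find extends vs; set v := nth x vs j.
have in_prefix w : (w \in take j vs) = antilex_lt w v.
  by rewrite in_take ?mem_vseq // -index_vseq_lt index_uniq ?vseq_uniq -?has_find.
have unextending u : antilex_lt u v -> ~~ is_simplex (u |: s).
  by rewrite -in_prefix => /index_ltn/(before_find x); rewrite nth_index ?mem_vseq //= => ->.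
apply/negP: (subsetP (foldl_step_sub_take _ _ j.+1) _ crit_s).
rewrite (take_nth x) -?has_find //; apply: foldl_step_first_match (@T0_closed n m) _ _.
  by rewrite inE; exact: (nth_find x has_extends).
move=> u; rewrite in_prefix inE => uv; apply/negP => sim_u.
have [v_s | /setD1_id s_v] := boolP (v \in s).
  have [w wv] := triangle_extends_before sim_s card_s v_s uv sim_u (unextending u uv).
  exact/negP/(unextending w wv).
by rewrite s_v (negbTE (unextending u uv)) in sim_u.
Qed.
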